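(* Let $X$ be a BN with full support on the DAG $\mathcal G$ with states $\mathcal A$, $f:\mathcal A\to\mathcal B$ a surjection and $U_v=f(X_v)$, and assume (D3) holds. Then for every vertex $v$ with $depth(v)=1$, all $w,\tilde w\in\mathcal A^{pa(v)}$ with $f(w)=f(\tilde w)$, and all $b\in\mathcal B$, $$\mathbb P(U_v=b\mid X_{pa(v)}=w)=\mathbb P(U_v=b\mid X_{pa(v)}=\tilde w).$$
   Context: $\mathcal G=(V,E)$ is a finite DAG; $pa(v)$ parents; $V_s$ parentless vertices, $V_p=V\setminus V_s$; $depth(v)$ maximal number of edges of a directed path from a vertex of $V_s$ to $v$. A BN on $\mathcal G$ with states $\mathcal A$ (finite) is specified by distributions $\alpha_v$ on $\mathcal A$ for $v\in V_s$ and CPDs $P_v(\cdot\mid a_{pa(v)})$ for $v\in V_p$; law $\prod_{v\in V_s}\alpha_v(x_v)\prod_{v\in V_p}P_v(x_v\mid x_{pa(v)})$; full support: all $x\in\mathcal A^V$ have positive probability. $\mathbb P_{\tilde\alpha}$ is the law with the same CPDs and initial distribution $\tilde\alpha$. $f$ applied coordinatewise. (D3): for every initial distribution $\tilde\alpha$, $(U_v)$ under $\mathbb P_{\tilde\alpha}$ factorises over $\mathcal G$ (law of form $\prod_vq_v(u_v\mid u_{pa(v)})$), and for every $v\in V_p$, $b_v$, $b_{pa(v)}$ the value $\mathbb P_{\tilde\alpha}(U_v=b_v\mid U_{pa(v)}=b_{pa(v)})$ is the same for all $\tilde\alpha$ with $\mathbb P_{\tilde\alpha}(U_{pa(v)}=b_{pa(v)})>0$.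 *)

From mathcomp Require Import all_boot all_order all_algebra.
Unset Printing Implicit Defensive.
Import Order.TTheory GRing.Theory Num.Theory.
Local Open Scope ring_scope.


Definition edge {V : finType} (pa : V -> {set V}) : rel V := fun u w => u \in pa w.

Definition acyclic {V : finType} (pa : V -> {set V}) : Prop :=
  forall (x : V) (p : seq V), path (edge pa) x p -> last x p = x -> p = [::].

Definition Vs {V : finType} (pa : V -> {set V}) : {set V} := [set v | pa v == set0].

Definition src_path_len {V : finType} (pa : V -> {set V}) (v : V) (k : nat) : Prop :=
  exists (s : V) (p : seq V),
    [/\ s \in Vs pa, size p = k, path (edge pa) s p & last s p = v].

Definition depth_is {V : finType} (pa : V -> {set V}) (v : V) (d : nat) : Prop :=
  src_path_len pa v d /\ forall k, src_path_len pa v k -> (k <= d)%N.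

Definition VSub {V : finType} (S : {set V}) := {u : V | u \in S}.

Definition prj {V : finType} {T : Type} (S : {set V}) (x : {ffun V -> T}) : {ffun VSub S -> T} :=
  [ffun u : VSub S => x (val u)].

Definition is_dist {R : realFieldType} {T : finType} (p : T -> R) : Prop :=
  (forall t, 0 <= p t) /\ \sum_t p t = 1.


Definition law {V A : finType} {R : realFieldType} (pa : V -> {set V}) (alpha : V -> A -> R)
  (P : forall v : V, {ffun VSub (pa v) -> A} -> A -> R) (x : {ffun V -> A}) : R :=
  (\prod_(v in Vs pa) alpha v (x v)) *
  (\prod_(v in ~: Vs pa) P v (prj (pa v) x) (x v)).

Definition prob {V A : finType} {R : realFieldType} (pa : V -> {set V}) (alpha : V -> A -> R)
  (P : forall v : V, {ffun VSub (pa v) -> A} -> A -> R)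
  (E : pred {ffun V -> A}) : R :=
  \sum_(x | E x) law pa alpha P x.

Definition cprob {V A : finType} {R : realFieldType} (pa : V -> {set V}) (alpha : V -> A -> R)
  (P : forall v : V, {ffun VSub (pa v) -> A} -> A -> R)
  (E F : pred {ffun V -> A}) : R :=
  prob pa alpha P (predI E F) / prob pa alpha P F.

Definition init_dist {V A : finType} {R : realFieldType} (pa : V -> {set V}) (alpha : V -> A -> R) : Prop :=
  forall v, v \in Vs pa -> is_dist (alpha v).

Definition cpds {V A : finType} {R : realFieldType} (pa : V -> {set V})
  (P : forall v : V, {ffun VSub (pa v) -> A} -> A -> R) : Prop :=
  forall v, v \notin Vs pa -> forall a, is_dist (P v a).

Definition full_support {V A : finType} {R : realFieldType} (pa : V -> {set V}) (alpha : V -> A -> R)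
  (P : forall v : V, {ffun VSub (pa v) -> A} -> A -> R) : Prop :=
  forall x, 0 < law pa alpha P x.


Definition fmap {V A B : finType} (f : A -> B) (x : {ffun V -> A}) : {ffun V -> B} :=
  [ffun v => f (x v)].

Definition D3 {V A B : finType} {R : realFieldType} (pa : V -> {set V})
  (P : forall v : V, {ffun VSub (pa v) -> A} -> A -> R) (f : A -> B) : Prop :=
  (forall alpha', init_dist pa alpha' ->
     exists q : forall v : V, {ffun VSub (pa v) -> B} -> B -> R,
       (forall v c, is_dist (q v c)) /\
       forall u : {ffun V -> B},
         prob pa alpha' P (fun x => fmap f x == u)
         = \prod_v q v (prj (pa v) u) (u v))
  /\
  (forall v, v \notin Vs pa ->
   forall (bv : B) (bpa : {ffun VSub (pa v) -> B}) alpha1 alpha2,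
     init_dist pa alpha1 -> init_dist pa alpha2 ->
     0 < prob pa alpha1 P (fun x => prj (pa v) (fmap f x) == bpa) ->
     0 < prob pa alpha2 P (fun x => prj (pa v) (fmap f x) == bpa) ->
     cprob pa alpha1 P (fun x => f (x v) == bv)
                       (fun x => prj (pa v) (fmap f x) == bpa)
     = cprob pa alpha2 P (fun x => f (x v) == bv)
                       (fun x => prj (pa v) (fmap f x) == bpa)).

From mathcomp Require Import all_boot all_order all_algebra.
Import Order.TTheory GRing.Theory Num.Theory.
Local Open Scope ring_scope.

(* If depth(v) = 1, every parent of v is a source.  Summing out the remaining
   vertices one sink at a time (possible by acyclicity) gives
     P(X_pa(v) = w, X_v = a) = prod_(u in pa(v)) alpha_u(w_u) * P_v(a | w),
   so under full support P(U_v = b | X_pa(v) = w) = sum_(f a = b) P_v(a | w).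
   Taking as initial distribution the point mass at w on pa(v), the event
   U_pa(v) = f(w) coincides almost surely with X_pa(v) = w, so the same number is
   the conditional probability of U_v = b given U_pa(v) = f(w) under that initial
   distribution.  By (D3) it does not depend on the initial distribution, hence
   is the same for w and w' when f(w) = f(w'). *)

Section AcyclicRelation.
Variables (T : finType) (e : rel T).

Lemma successor_cycle {S : {set T}} {c : T -> T} {x} : x \in S ->
  (forall y, y \in S -> (c y \in S) && e y (c y)) ->
  exists y p, [/\ p != [::], path e y p & last y p = y].
Proof.
move=> xS cS.
have iterS k y : y \in S -> iter k c y \in S.
  by elim: k => [|k IHk] yS //=; case/andP: (cS _ (IHk yS)).
have pathS k y : y \in S -> path e y (traject c (c y) k).
  elim: k y => [|k IHk] y yS //=; case/andP: (cS _ yS) => cyS eyc.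
  by rewrite eyc IHk.
have /trajectP[i lt_i_ord loop_i] := looping_order c x.
exists (iter i c x), (traject c (c (iter i c x)) (order c x - i)); split.
- by rewrite -size_eq0 size_traject subn_eq0 -ltnNge.
- exact/pathS/iterS.
- by rewrite last_traject -iterD subnK ?(ltnW lt_i_ord).
Qed.

Hypothesis e_acyclic : forall x p, path e x p -> last x p = x -> p = [::].

Lemma acyclic_maximal_in (S : {set T}) x : x \in S ->
  exists2 y, y \in S & forall z, z \in S -> ~~ e y z.
Proof.
move=> xS.
have [/exists_inP[y yS /forall_inP]|] :=
  boolP [exists y in S, [forall z in S, ~~ e y z]]; first by exists y.
rewrite negb_exists_in => /forall_inP nomax.
pose c y := odflt y [pick z in S | e y z].
have cS y : y \in S -> (c y \in S) && e y (c y).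
  move=> yS; rewrite /c; case: pickP => [z /andP[-> ->] // | none].
  move: (nomax y yS); rewrite negb_forall_in => /exists_inP[z zS].
  by rewrite negbK => eyz; have := none z; rewrite zS eyz.
have [y [p [p_nil e_p p_cycle]]] := successor_cycle xS cS.
by move: p_nil; rewrite (e_acyclic _ _ e_p p_cycle).
Qed.

End AcyclicRelation.

Section Dag.
Context {V : finType} {pa : V -> {set V}}.
Hypothesis pa_acyclic : acyclic pa.

Lemma notin_pa_self u : u \notin pa u.
Proof.
apply/negP => uu; have := pa_acyclic u [:: u].
by rewrite /= /edge uu => /(_ isT erefl).
Qed.

Lemma acyclic_rev :
  forall x p, path [rel u w | edge pa w u] x p -> last x p = x -> p = [::].
Proof.
move=> x [//|y p] e_p p_cycle.
have := pa_acyclic (last x (y :: p)) (rev (belast x (y :: p))).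
rewrite rev_path => /(_ e_p); rewrite p_cycle /= rev_cons last_rcons.
by move=> /(_ erefl) /eqP; rewrite -size_eq0 size_rcons.
Qed.

Lemma exists_sink_in {S : {set V}} {x} : x \in S ->
  exists2 u, u \in S & forall t, t \in S -> u \notin pa t.
Proof. exact: (@acyclic_maximal_in _ (edge pa) pa_acyclic). Qed.

Lemma exists_source_in {S : {set V}} {x} : x \in S ->
  exists2 u, u \in S & forall t, t \in S -> t \notin pa u.
Proof. exact: (@acyclic_maximal_in _ _ acyclic_rev). Qed.

Lemma depth1_parents_sources v :
  depth_is pa v 1 -> v \notin Vs pa /\ {subset pa v <= Vs pa}.
Proof.
case=> -[s [p [sVs size_p s_p p_v]]] max_depth; split.
  case: p size_p s_p p_v => [|y [|//]] //= _ /andP[sy _] <-.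
  by rewrite inE; apply/set0Pn; exists s.
move=> u u_pa; apply/negPn/negP => uNs.
pose S := [set t | (t \notin Vs pa) && connect (edge pa) t u].
have uS : u \in S by rewrite inE uNs connect0.
have [t] := exists_source_in uS; rewrite inE => /andP[tNs t_u] t_source.
have [s' s'_t] : exists s', s' \in pa t by apply/set0Pn; rewrite inE in tNs.
have s'Vs : s' \in Vs pa.
  apply/negPn/negP => s'Ns; have := t_source s'.
  by rewrite s'_t inE s'Ns (connect_trans (connect1 s'_t) t_u) => /(_ isT).
have /connectP[q t_q q_u] := t_u.
suff : ((size q).+2 <= 1)%N by [].
apply: max_depth; exists s', (rcons (t :: q) v); split=> //.
- by rewrite size_rcons.
- by rewrite rcons_path /= t_q -q_u /edge s'_t u_pa.
- by rewrite last_rcons.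
Qed.

End Dag.

Definition upd {V A : finType} (x : {ffun V -> A}) (u : V) (a : A) : {ffun V -> A} :=
  [ffun z => if z == u then a else x z].

Definition agrees_off {V A : finType} (S : {set V}) (x0 x : {ffun V -> A}) : bool :=
  [forall t, (t \notin S) ==> (x t == x0 t)].

Lemma sum_agrees_off_setD1 {V A : finType} {R : nmodType} (S : {set V}) x0 u a
    (F : {ffun V -> A} -> R) : u \in S ->
  \sum_(x | agrees_off S x0 x && (x u == a)) F x
  = \sum_(y | agrees_off (S :\ u) x0 y) F (upd y u a).
Proof.
move=> uS.
rewrite (reindex_onto (fun y => upd y u a) (fun x => upd x u (x0 u))); last first.
  by move=> x /andP[_ /eqP xu]; apply/ffunP => t; rewrite !ffunE; case: eqP => // ->.
apply: eq_bigl => y; rewrite ffunE eqxx eqxx andbT.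
apply/andP/forallP => [[/forallP y_off /eqP y_u] t | y_off].
  rewrite in_setD1 negb_and negbK; case: eqP => [-> | tNu] /=.
    by have := congr1 (fun x : {ffun V -> A} => x u) y_u; rewrite !ffunE eqxx => <-.
  by have := y_off t; rewrite ffunE (introF eqP tNu).
split.
  apply/forallP => t; apply/implyP => tNS; rewrite ffunE.
  have tNu : t != u by apply: contraNneq tNS => ->.
  by rewrite (negbTE tNu); have := y_off t; rewrite in_setD1 negb_and tNS orbT.
apply/eqP/ffunP => t; rewrite !ffunE; case: eqP => // ->.
by have := y_off u; rewrite in_setD1 eqxx => /eqP.
Qed.

Section SumOutKernels.
Context {V A : finType} {R : realFieldType} {pa : V -> {set V}}.
Hypothesis pa_acyclic : acyclic pa.
Variable K : V -> {ffun V -> A} -> R.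
Hypothesis K_local : forall u (x y : {ffun V -> A}),
  {in pa u, x =1 y} -> x u = y u -> K u x = K u y.
Hypothesis K_normalized : forall u x, \sum_a K u (upd x u a) = 1.

(* Induction on S, summing out a vertex of S that is a parent of no vertex of S. *)
Lemma sum_prod_kernels (S : {set V}) x0 :
  \sum_(x | agrees_off S x0 x) \prod_(u in S) K u x = 1.
Proof.
move Hn: #|S| => n; elim: n S Hn x0 => [|n IHn] S cardS x0.
  rewrite (cards0_eq cardS) (eq_bigl (pred1 x0)) ?big_pred1_eq ?big_set0 // => x /=.
  apply/forallP/eqP => [x_off|-> t]; last by rewrite eqxx implybT.
  by apply/ffunP => t; apply/eqP; have := x_off t; rewrite inE.
have [x xS] : exists x, x \in S by apply/set0Pn; rewrite -card_gt0 cardS.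
have [u uS u_sink] := exists_sink_in pa_acyclic xS.
have cardSu : #|S :\ u| = n by move: cardS; rewrite (cardsD1 u) uS => -[].
have K_upd y a : \prod_(t in S :\ u) K t (upd y u a) = \prod_(t in S :\ u) K t y.
  apply: eq_bigr => t /setD1P[tNu tS]; apply: K_local; last by rewrite ffunE (negbTE tNu).
  move=> z z_pa; rewrite ffunE; case: eqP => // zu.
  by have := u_sink t tS; rewrite -zu z_pa.
rewrite (partition_big (fun x : {ffun V -> A} => x u) predT) //=.
under eq_bigr => a _ do rewrite sum_agrees_off_setD1 //.
rewrite exchange_big /= -[RHS](IHn _ cardSu x0); apply: eq_bigr => y _.
under eq_bigr => a _ do rewrite (big_setD1 u uS) K_upd.
by rewrite -big_distrl /= K_normalized mul1r.
Qed.

End SumOutKernels.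

Definition extend {V A : finType} {S : {set V}} (d : A) (w : {ffun VSub S -> A}) :
  {ffun V -> A} := [ffun z => odflt d (omap w (insub z))].

Lemma extend_val {V A : finType} {S : {set V}} (d : A) (w : {ffun VSub S -> A}) s :
  extend d w (val s) = w s.
Proof. by rewrite ffunE valK. Qed.

Lemma prj_extend {V A : finType} {S : {set V}} (d : A) (w : {ffun VSub S -> A}) :
  prj S (extend d w) = w.
Proof. by apply/ffunP => s; rewrite ffunE extend_val. Qed.

Section BayesNet.
Context {V A : finType} {R : realFieldType} {pa : V -> {set V}}.
Variables (alpha : V -> A -> R) (P : forall v : V, {ffun VSub (pa v) -> A} -> A -> R).
Hypotheses (pa_acyclic : acyclic pa) (alpha_dist : init_dist pa alpha).
Hypothesis P_dist : cpds pa P.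

Definition kernel u (x : {ffun V -> A}) : R :=
  if u \in Vs pa then alpha u (x u) else P u (prj (pa u) x) (x u).

Lemma lawE x : law pa alpha P x = \prod_u kernel u x.
Proof.
rewrite /law [RHS](bigID (mem (Vs pa))) /=; congr (_ * _).
  by apply: eq_bigr => u uVs; rewrite /kernel uVs.
by apply: eq_big => u; rewrite ?inE // => uNs; rewrite /kernel inE (negbTE uNs).
Qed.

Lemma law_ge0 x : 0 <= law pa alpha P x.
Proof.
rewrite /law; apply: mulr_ge0; apply: prodr_ge0 => u.
  by case/alpha_dist.
by rewrite inE => /P_dist/(_ (prj (pa u) x))[].
Qed.

Lemma kernel_local u (x y : {ffun V -> A}) :
  {in pa u, x =1 y} -> x u = y u -> kernel u x = kernel u y.
Proof.
move=> xy_pa xy_u; rewrite /kernel xy_u; case: ifP => // _; congr (P _ _ _).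
by apply/ffunP => s; rewrite !ffunE xy_pa ?(valP s).
Qed.

Lemma kernel_normalized u x : \sum_a kernel u (upd x u a) = 1.
Proof.
rewrite /kernel; have [uVs|uNs] := boolP (u \in Vs pa).
  by under eq_bigr do rewrite ffunE eqxx; case: (alpha_dist _ uVs).
have prj_upd a : prj (pa u) (upd x u a) = prj (pa u) x.
  apply/ffunP => s; rewrite !ffunE; case: eqP => // su.
  by have := valP s; rewrite su (negbTE (notin_pa_self pa_acyclic u)).
under eq_bigr do rewrite prj_upd ffunE eqxx.
by case: (P_dist _ uNs (prj (pa u) x)).
Qed.

Variables (v : V) (d : A).
Hypotheses (v_nonsource : v \notin Vs pa) (pa_v_sources : {subset pa v <= Vs pa}).

Lemma prob_parents_child w a :
  prob pa alpha P (fun x => (prj (pa v) x == w) && (x v == a))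
  = (\prod_(u in pa v) alpha u (extend d w u)) * P v w a.
Proof.
set C := v |: pa v; set x0 := upd (extend d w) v a.
have vNpa : v \notin pa v by apply: contraNN v_nonsource => /pa_v_sources.
have x0_v : x0 v = a by rewrite ffunE eqxx.
have x0_pa : {in pa v, x0 =1 extend d w}.
  by move=> u u_pa; rewrite ffunE; case: eqP => // uv; move: u_pa; rewrite uv (negbTE vNpa).
have prj_x0 : prj (pa v) x0 = w.
  by apply/ffunP => s; rewrite ffunE x0_pa ?(valP s) // extend_val.
clearbody x0.
have agrees_in x : agrees_off (~: C) x0 x -> {in C, x =1 x0}.
  by move=> /forallP x_off t tC; apply/eqP; have := x_off t; rewrite inE negbK tC.
have event_agrees x : (prj (pa v) x == w) && (x v == a) = agrees_off (~: C) x0 x.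
  apply/andP/idP => [[/eqP x_pa /eqP x_v] | /agrees_in xC].
    apply/forallP => t; rewrite inE negbK; apply/implyP => /setU1P[-> | t_pa].
      by rewrite x_v x0_v.
    by rewrite x0_pa // -x_pa -[t]/(val (Sub t t_pa : VSub (pa v))) extend_val ffunE.
  split; last by rewrite xC ?setU11 ?x0_v.
  by rewrite -prj_x0; apply/eqP/ffunP => s; rewrite !ffunE xC ?setU1r ?(valP s).
have kernelC x : agrees_off (~: C) x0 x ->
    \prod_(u in C) kernel u x = \prod_(u in C) kernel u x0.
  move=> /agrees_in xC; apply: eq_bigr => u uC; apply: kernel_local; last exact: xC.
  move=> z z_pa; apply: xC; case/setU1P: uC => [uv | u_pa]; first by rewrite setU1r -?uv.
  by move: z_pa; have := pa_v_sources _ u_pa; rewrite inE => /eqP ->; rewrite inE.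
rewrite /prob (eq_bigl _ _ event_agrees).
have prod_setC x : \prod_(u | u \notin C) kernel u x = \prod_(u in ~: C) kernel u x.
  by apply: eq_bigl => u; rewrite in_setC.
under eq_bigr => x x_agrees do rewrite lawE (bigID (mem C)) /= kernelC // prod_setC.
rewrite -big_distrr /=.
rewrite (sum_prod_kernels pa_acyclic _ kernel_local kernel_normalized) mulr1.
rewrite big_setU1 //= mulrC {2}/kernel (negbTE v_nonsource) prj_x0 x0_v; congr (_ * _).
by apply: eq_bigr => u u_pa; rewrite /kernel pa_v_sources // x0_pa.
Qed.

End BayesNet.

Lemma prj_fmap {V A B : finType} (S : {set V}) (f : A -> B) (x : {ffun V -> A}) :
  prj S (fmap f x) = fmap f (prj S x).
Proof. by apply/ffunP => s; rewrite !ffunE. Qed.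

Section DepthOneChild.
Context {V A B : finType} {R : realFieldType} {pa : V -> {set V}}.
Variables (P : forall v : V, {ffun VSub (pa v) -> A} -> A -> R) (f : A -> B).
Hypotheses (pa_acyclic : acyclic pa) (P_dist : cpds pa P).
Variables (v : V) (d : A) (b : B).
Hypotheses (v_nonsource : v \notin Vs pa) (pa_v_sources : {subset pa v <= Vs pa}).

Lemma prob_parents alpha w : init_dist pa alpha ->
  prob pa alpha P (fun x => prj (pa v) x == w) = \prod_(u in pa v) alpha u (extend d w u).
Proof.
move=> alpha_dist; rewrite /prob (partition_big (fun x : {ffun V -> A} => x v) predT) //=.
have [_ P_v_sum1] := P_dist _ v_nonsource w.
rewrite -[RHS]mulr1 -[X in _ * X]P_v_sum1 big_distrr /=; apply: eq_bigr => a _.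
exact: prob_parents_child.
Qed.

Lemma prob_child_image_parents alpha w : init_dist pa alpha ->
  prob pa alpha P
    (predI (fun x : {ffun V -> A} => f (x v) == b) (fun x => prj (pa v) x == w))
  = \prod_(u in pa v) alpha u (extend d w u) * \sum_(a | f a == b) P v w a.
Proof.
move=> alpha_dist; rewrite /prob big_distrr /=.
rewrite (partition_big (fun x : {ffun V -> A} => x v) (fun a => f a == b));
  last by move=> x /andP[].
apply: eq_bigr => a fa; rewrite -prob_parents_child //; apply: eq_bigl => x /=.
by case: (x v =P a) => [->|]; rewrite ?fa ?andbF ?andbT.
Qed.

Lemma cprob_child_image_parents alpha w :
  init_dist pa alpha -> full_support pa alpha P ->
  cprob pa alpha P (fun x => f (x v) == b) (fun x => prj (pa v) x == w)
  = \sum_(a | f a == b) P v w a.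
Proof.
move=> alpha_dist full; rewrite /cprob prob_child_image_parents // -prob_parents //.
have : 0 < prob pa alpha P (fun x => prj (pa v) x == w).
  rewrite /prob (bigD1 (extend d w)) ?prj_extend //=.
  by rewrite ltr_wpDr ?sumr_ge0 // => x _; apply: law_ge0.
by move=> /lt0r_neq0 prob_neq0; rewrite mulrC mulKf.
Qed.

Definition point_init (alpha : V -> A -> R) (w : {ffun VSub (pa v) -> A}) u a : R :=
  if u \in pa v then (a == extend d w u)%:R else alpha u a.

Lemma point_init_dist alpha w : init_dist pa alpha -> init_dist pa (point_init alpha w).
Proof.
move=> alpha_dist u uVs; rewrite /point_init; case: (u \in pa v); last exact: alpha_dist.
split=> [a|]; first by rewrite ler0n.
by rewrite (bigD1 (extend d w u)) //= eqxx big1 ?addr0 // => a /negbTE ->.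
Qed.

Lemma law_point_init_eq0 alpha w x :
  prj (pa v) x != w -> law pa (point_init alpha w) P x = 0.
Proof.
move=> x_pa; have [s x_s] : exists s, x (val s) != w s.
  apply/existsP; apply: contraNT x_pa; rewrite negb_exists => /forallP x_w.
  by apply/eqP/ffunP => s; rewrite ffunE; apply/eqP; have := x_w s; rewrite negbK.
rewrite /law (bigD1 (val s)) ?pa_v_sources ?(valP s) //=.
by rewrite {1}/point_init (valP s) extend_val (negbTE x_s) !mul0r.
Qed.

Lemma prob_point_init_eq alpha w (E1 E2 : pred {ffun V -> A}) :
  (forall x, prj (pa v) x == w -> E1 x = E2 x) ->
  prob pa (point_init alpha w) P E1 = prob pa (point_init alpha w) P E2.
Proof.
move=> E12; rewrite /prob [LHS]big_mkcond [RHS]big_mkcond; apply: eq_bigr => x _.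
have [/E12 -> //|/law_point_init_eq0 ->] := boolP (prj (pa v) x == w).
by case: (E1 x); case: (E2 x).
Qed.

Lemma prob_point_init_image alpha w : init_dist pa alpha ->
  prob pa (point_init alpha w) P (fun x => prj (pa v) (fmap f x) == fmap f w) = 1.
Proof.
move=> alpha_dist; rewrite (@prob_point_init_eq _ w _ (fun x => prj (pa v) x == w)).
  rewrite prob_parents; last exact: point_init_dist.
  by apply: big1 => u u_pa; rewrite /point_init u_pa eqxx.
by move=> x /eqP x_w /=; rewrite prj_fmap x_w !eqxx.
Qed.

Lemma cprob_point_init alpha w : init_dist pa alpha ->
  cprob pa (point_init alpha w) P (fun x => f (x v) == b)
    (fun x => prj (pa v) (fmap f x) == fmap f w)
  = \sum_(a | f a == b) P v w a.
Proof.
move=> alpha_dist; rewrite /cprob prob_point_init_image // divr1.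
rewrite (@prob_point_init_eq _ w _
  (predI (fun x : {ffun V -> A} => f (x v) == b) (fun x => prj (pa v) x == w))).
  rewrite prob_child_image_parents; last exact: point_init_dist.
  by rewrite big1 ?mul1r // => u u_pa; rewrite /point_init u_pa eqxx.
by move=> x /eqP x_w /=; rewrite prj_fmap x_w !eqxx.
Qed.

End DepthOneChild.

Theorem mainTheorem12 (V A B : finType) (R : realFieldType)
  (pa : V -> {set V}) (alpha : V -> A -> R)
  (P : forall v : V, {ffun VSub (pa v) -> A} -> A -> R) (f : A -> B) :
  acyclic pa ->
  init_dist pa alpha ->
  cpds pa P ->
  full_support pa alpha P ->
  (forall b : B, exists a : A, f a = b) ->
  D3 pa P f ->
  forall v : V, depth_is pa v 1 ->
  forall (w w' : {ffun VSub (pa v) -> A}),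
    [ffun u => f (w u)] = [ffun u => f (w' u)] ->
  forall b : B,
    cprob pa alpha P (fun x => f (x v) == b) (fun x => prj (pa v) x == w)
    = cprob pa alpha P (fun x => f (x v) == b) (fun x => prj (pa v) x == w').
Proof.
move=> pa_acyclic alpha_dist P_dist full f_surj [_ D3_cpd] v depth_v w w' f_w b.
have [v_nonsource pa_v_sources] := depth1_parents_sources pa_acyclic v depth_v.
(* Surjectivity of f is only needed to inhabit A. *)
have [d _] := f_surj b.
have cprob_parents := cprob_child_image_parents P f pa_acyclic P_dist v d b
  v_nonsource pa_v_sources alpha _ alpha_dist full.
have cprob_point := cprob_point_init P f pa_acyclic P_dist v d b
  v_nonsource pa_v_sources alpha _ alpha_dist.
have prob_point := prob_point_init_image P f pa_acyclic P_dist v d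
  v_nonsource pa_v_sources alpha _ alpha_dist.
have f_w' : fmap f w' = fmap f w := esym f_w.
rewrite !cprob_parents -(cprob_point w) -(cprob_point w') f_w'.
apply: D3_cpd => //; try exact: point_init_dist.
- by rewrite prob_point ltr01.
- by rewrite -f_w' prob_point ltr01.
Qed.
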